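(* Let $M$ be a system execution satisfying the Lazy Set axioms A0, A1, A2, let $\Rightarrow$ be the relation defined in the context, and suppose $X\Rightarrow Y\Rightarrow Z$. Then: (1) if $\mathrm{Add}(X)$, then $X<Z$, $\mathrm{Cnt}^1(Y)$ and $\mathrm{Rem}^1(Z)$; (2) if $\mathrm{Rem}(X)$, then $X<Z$; (3) if $\mathrm{Cnt}(X)$, then $\mathrm{Begin}(X)<\mathrm{End}(Z)$.
   Context: A system execution $M$ consists of: a set of events, partitioned into low-level events (actions) and high-level events; unary predicates $\mathrm{Add},\mathrm{Rem},\mathrm{Cnt}$ on events; a partial order $<$ on events in which every event has finitely many predecessors (and Lamport's finiteness property: for every event $x$ there is a finite set $E$ with $x<y$ for all events $y\notin E$); functions $\mathrm{Begin},\mathrm{End}$ from events to actions with $\mathrm{Begin}(e)=\mathrm{End}(e)=e$ for actions $e$; functions $\chi$ (events $\to\{0,1,f\}$), $\mathrm{val}$ (events $\to\mathbb N$), $\gamma$ (events $\to$ events). For events $X,Y$, $X<Y$ iff $\mathrm{End}(X)<\mathrm{Begin}(Y)$. Notation: $\mathrm{Add}^p(a)$ abbreviates $\mathrm{Add}(a)\wedge\chi(a)=p$, similarly $\mathrm{Rem}^p,\mathrm{Cnt}^p$; $\mathrm{Op}^p(a)$ abbreviates $(\mathrm{Add}(a)\vee\mathrm{Rem}(a)\vee\mathrm{Cnt}(a))\wedge\chi(a)=p$ for $p\in\{0,1\}$. A0: $\mathrm{Add},\mathrm{Rem},\mathrm{Cnt}$ pairwise disjoint; $\mathrm{Add},\mathrm{Rem}$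 events are actions, $\mathrm{Cnt}$ events are high-level; $\mathrm{Begin}(X),\mathrm{End}(X)$ are actions; for $\mathrm{Cnt}$ events $E$, $\mathrm{Begin}(E)<\mathrm{End}(E)$; $<$ restricted to actions is linear. A1: for every $A$ with $\mathrm{Op}^1(A)$: $\mathrm{Add}^0(\gamma(A))$, $\mathrm{val}(\gamma(A))=\mathrm{val}(A)$, $\gamma(A)<\mathrm{End}(A)$, and no $R$ has $\mathrm{Rem}^1(R)$, $\gamma(R)=\gamma(A)$, $\gamma(A)<R<A$. A2: if $\mathrm{Op}^0(B)$, $\mathrm{Add}^0(A)$, $A<B$, $\mathrm{val}(A)=\mathrm{val}(B)$, then some $R$ has $\mathrm{Rem}^1(R)$, $A=\gamma(R)$, $R<\mathrm{End}(B)$. The relation $\Rightarrow$ on events holds exactly in the following cases: (1) for every $\mathrm{Cnt}^1$ event $C$: $\gamma(C)\Rightarrow C$, and $C\Rightarrow R$ for every $R$ with $\mathrm{Rem}^1(R)$ and $\gamma(R)=\gamma(C)$; (2) $R\Rightarrow C$ whenever $\mathrm{Cnt}^0(C)$, $\mathrm{Rem}^1(R)$, $\mathrm{val}(R)=\mathrm{val}(C)$, not $C<R$, and $\gamma(R)<C$; (3) $C\Rightarrow A$ whenever $\mathrm{Cnt}^0(C)$, $\mathrm{Add}^0(A)$, $\mathrm{val}(C)=\mathrm{val}(A)$ and not $A<C$. *)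

From Stdlib Require Import List.
Set Implicit Arguments.

Inductive chival : Type := c0 | c1 | cf.

Record sysexec : Type := SysExec {
  ev : Type;
  action : ev -> Prop;             (* low-level events; the others are high-level *)
  Add : ev -> Prop;
  Rem : ev -> Prop;
  Cnt : ev -> Prop;
  lt : ev -> ev -> Prop;
  Begin : ev -> ev;
  End : ev -> ev;
  chi : ev -> chival;
  val : ev -> nat;
  gamma : ev -> ev
}.

Section Defs.
Variable M : sysexec.

Local Notation "x < y" := (lt M x y).

Definition is_sysexec : Prop :=
  (forall x, ~ x < x) /\
  (forall x y z, x < y -> y < z -> x < z) /\
  (forall x, exists l : list (ev M), forall y, y < x -> In y l) /\
  (* Lamport's finiteness property *)
  (forall x, exists l : list (ev M), forall y, ~ In y l -> x < y) /\
  (forall e, action M e -> Begin M e = e /\ End M e = e) /\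
  (forall X Y, X < Y <-> End M X < Begin M Y).

Definition Add_p (p : chival) (a : ev M) := Add M a /\ chi M a = p.
Definition Rem_p (p : chival) (a : ev M) := Rem M a /\ chi M a = p.
Definition Cnt_p (p : chival) (a : ev M) := Cnt M a /\ chi M a = p.
Definition Op_p (p : chival) (a : ev M) :=
  (Add M a \/ Rem M a \/ Cnt M a) /\ chi M a = p.

Definition A0 : Prop :=
  (forall e, ~ (Add M e /\ Rem M e)) /\
  (forall e, ~ (Add M e /\ Cnt M e)) /\
  (forall e, ~ (Rem M e /\ Cnt M e)) /\
  (forall e, Add M e -> action M e) /\
  (forall e, Rem M e -> action M e) /\
  (forall e, Cnt M e -> ~ action M e) /\
  (forall X, action M (Begin M X) /\ action M (End M X)) /\
  (forall E, Cnt M E -> Begin M E < End M E) /\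
  (forall a b, action M a -> action M b -> a = b \/ a < b \/ b < a).

Definition A1 : Prop :=
  forall A, Op_p c1 A ->
    Add_p c0 (gamma M A) /\
    val M (gamma M A) = val M A /\
    gamma M A < End M A /\
    ~ (exists R, Rem_p c1 R /\ gamma M R = gamma M A /\
                 gamma M A < R /\ R < A).

Definition A2 : Prop :=
  forall A B, Op_p c0 B -> Add_p c0 A -> A < B -> val M A = val M B ->
    exists R, Rem_p c1 R /\ A = gamma M R /\ R < End M B.

Definition arrow (X Y : ev M) : Prop :=
  (Cnt_p c1 Y /\ X = gamma M Y) \/
  (Cnt_p c1 X /\ Rem_p c1 Y /\ gamma M Y = gamma M X) \/
  (Cnt_p c0 Y /\ Rem_p c1 X /\ val M X = val M Y /\ ~ Y < X /\ gamma M X < Y) \/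
  (Cnt_p c0 X /\ Add_p c0 Y /\ val M X = val M Y /\ ~ Y < X).

End Defs.

(* Each arrow step fixes the kinds of its endpoints, so a chain X => Y => Z
   has one of four shapes.  Two of them are immediate from A1 (gamma(C) <
   End(C)) and from "not Y < X" read through the linear order on actions.
   The other two reduce to one fact: if an operation A with chi = 1 and an
   operation B with chi = 0 have the same value and gamma(A) < B, then
   Begin(A) < End(B).  Indeed A2 yields a successful remove R of gamma(A)
   with R < End(B); were End(B) <= Begin(A), R would lie strictly between
   gamma(A) and A, which A1 forbids. *)

Set Implicit Arguments.
Unset Strict Implicit.

Section LazySet.

Variable M : sysexec.
Hypothesis HM : is_sysexec M.
Hypothesis H0 : A0 M.
Hypothesis H1 : A1 M.
Hypothesis H2 : A2 M.

Local Notation "x < y" := (lt M x y).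

Lemma lt_trans x y z : x < y -> y < z -> x < z.
Proof. destruct HM as (_ & Htr & _). apply Htr. Qed.

Lemma lt_End_Begin X Y : X < Y <-> End M X < Begin M Y.
Proof. destruct HM as (_ & _ & _ & _ & _ & Hlt). apply Hlt. Qed.

Lemma Begin_action_id e : action M e -> Begin M e = e.
Proof. destruct HM as (_ & _ & _ & _ & Hact & _). apply Hact. Qed.

Lemma End_action_id e : action M e -> End M e = e.
Proof. destruct HM as (_ & _ & _ & _ & Hact & _). apply Hact. Qed.

Lemma not_Add_Rem e : Add M e -> Rem M e -> False.
Proof. destruct H0 as (H & _). intros; apply (H e); split; assumption. Qed.

Lemma not_Add_Cnt e : Add M e -> Cnt M e -> False.
Proof. destruct H0 as (_ & H & _). intros; apply (H e); split; assumption. Qed.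

Lemma not_Rem_Cnt e : Rem M e -> Cnt M e -> False.
Proof. destruct H0 as (_ & _ & H & _). intros; apply (H e); split; assumption. Qed.

Lemma Add_action e : Add M e -> action M e.
Proof. destruct H0 as (_ & _ & _ & H & _). apply H. Qed.

Lemma Rem_action e : Rem M e -> action M e.
Proof. destruct H0 as (_ & _ & _ & _ & H & _). apply H. Qed.

Lemma Begin_action X : action M (Begin M X).
Proof. destruct H0 as (_ & _ & _ & _ & _ & _ & H & _). apply H. Qed.

Lemma End_action X : action M (End M X).
Proof. destruct H0 as (_ & _ & _ & _ & _ & _ & H & _). apply H. Qed.

Lemma actions_total a b :
  action M a -> action M b -> a = b \/ a < b \/ b < a.
Proof. destruct H0 as (_ & _ & _ & _ & _ & _ & _ & _ & H). apply H. Qed.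

Lemma action_lt_Begin a Y : action M a -> a < Y <-> a < Begin M Y.
Proof. intros Ha. rewrite lt_End_Begin, (End_action_id Ha). reflexivity. Qed.

Lemma Begin_le_of_not_lt b X :
  action M b -> ~ b < X -> Begin M X = b \/ Begin M X < b.
Proof.
  intros Hb HbX.
  destruct (actions_total (Begin_action X) Hb) as [E | [L | L]]; auto.
  exfalso; apply HbX, action_lt_Begin; assumption.
Qed.

Lemma Op1_Cnt1 C : Cnt_p M c1 C -> Op_p M c1 C.
Proof. intros [HC Hc]. split; auto. Qed.

Lemma Op1_Rem1 R : Rem_p M c1 R -> Op_p M c1 R.
Proof. intros [HR Hc]. split; auto. Qed.

Lemma Op0_Cnt0 C : Cnt_p M c0 C -> Op_p M c0 C.
Proof. intros [HC Hc]. split; auto. Qed.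

Lemma Op0_Add0 A : Add_p M c0 A -> Op_p M c0 A.
Proof. intros [HA Hc]. split; auto. Qed.

Lemma gamma_Add0 A : Op_p M c1 A -> Add_p M c0 (gamma M A).
Proof. intros HA. apply (H1 HA). Qed.

Lemma val_gamma A : Op_p M c1 A -> val M (gamma M A) = val M A.
Proof. intros HA. apply (H1 HA). Qed.

Lemma gamma_lt_End A : Op_p M c1 A -> gamma M A < End M A.
Proof. intros HA. apply (H1 HA). Qed.

Lemma gamma_Rem1_lt R : Rem_p M c1 R -> gamma M R < R.
Proof.
  intros HR. pose proof (gamma_lt_End (Op1_Rem1 HR)) as H.
  rewrite (End_action_id (Rem_action (proj1 HR))) in H. exact H.
Qed.

Lemma Rem1_not_lt_Op1 A R :
  Op_p M c1 A -> Rem_p M c1 R -> gamma M R = gamma M A -> ~ R < A.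
Proof.
  intros HA HR Hg HRA. apply (H1 HA).
  exists R. rewrite <- Hg. split; [|split; [|split]]; auto.
  apply gamma_Rem1_lt, HR.
Qed.

Lemma Op1_Begin_lt_Op0_End A B :
  Op_p M c1 A -> Op_p M c0 B -> gamma M A < B -> val M A = val M B ->
  Begin M A < End M B.
Proof.
  intros HA HB HgB Hv.
  destruct (H2 HB (gamma_Add0 HA) HgB) as (R & HR & Hg & HRB).
  { rewrite val_gamma; assumption. }
  assert (HRA : ~ R < Begin M A).
  { rewrite <- action_lt_Begin by apply (Rem_action (proj1 HR)).
    apply Rem1_not_lt_Op1; auto. }
  destruct (actions_total (Begin_action A) (End_action B)) as [E | [L | L]].
  - exfalso; apply HRA; rewrite E; assumption.
  - assumption.
  - exfalso; apply HRA, (lt_trans HRB L).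
Qed.

Lemma arrow_from_Add X Y :
  Add M X -> arrow M X Y -> Cnt_p M c1 Y /\ X = gamma M Y.
Proof.
  intros HX [H | [H | [H | H]]].
  - exact H.
  - destruct H as ([HC _] & _); exfalso; apply (not_Add_Cnt HX HC).
  - destruct H as (_ & [HR _] & _); exfalso; apply (not_Add_Rem HX HR).
  - destruct H as ([HC _] & _); exfalso; apply (not_Add_Cnt HX HC).
Qed.

Lemma arrow_from_Rem X Y :
  Rem M X -> arrow M X Y ->
  Cnt_p M c0 Y /\ Rem_p M c1 X /\ val M X = val M Y /\ ~ Y < X /\ gamma M X < Y.
Proof.
  intros HX [H | [H | [H | H]]].
  - destruct H as (HY & ->).
    exfalso; apply (not_Add_Rem (proj1 (gamma_Add0 (Op1_Cnt1 HY))) HX).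
  - destruct H as ([HC _] & _); exfalso; apply (not_Rem_Cnt HX HC).
  - exact H.
  - destruct H as ([HC _] & _); exfalso; apply (not_Rem_Cnt HX HC).
Qed.

Lemma arrow_from_Cnt X Y :
  Cnt M X -> arrow M X Y ->
  (Cnt_p M c1 X /\ Rem_p M c1 Y /\ gamma M Y = gamma M X) \/
  (Cnt_p M c0 X /\ Add_p M c0 Y /\ val M X = val M Y /\ ~ Y < X).
Proof.
  intros HX [H | [H | [H | H]]].
  - destruct H as (HY & ->).
    exfalso; apply (not_Add_Cnt (proj1 (gamma_Add0 (Op1_Cnt1 HY))) HX).
  - left; exact H.
  - destruct H as (_ & [HR _] & _); exfalso; apply (not_Rem_Cnt HR HX).
  - right; exact H.
Qed.

Lemma chain_from_Add X Y Z :
  Add M X -> arrow M X Y -> arrow M Y Z ->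
  X < Z /\ Cnt_p M c1 Y /\ Rem_p M c1 Z.
Proof.
  intros HX HXY HYZ.
  destruct (arrow_from_Add HX HXY) as (HY & ->).
  destruct (arrow_from_Cnt (proj1 HY) HYZ) as [(_ & HZ & Hg) | ([_ Hc] & _)].
  - split; [|split]; auto.
    rewrite <- Hg. apply gamma_Rem1_lt, HZ.
  - destruct HY as [_ Hc']. congruence.
Qed.

Lemma chain_from_Rem X Y Z :
  Rem M X -> arrow M X Y -> arrow M Y Z -> X < Z.
Proof.
  intros HX HXY HYZ.
  destruct (arrow_from_Rem HX HXY) as (HY & HX1 & HvXY & _ & HgY).
  destruct (arrow_from_Cnt (proj1 HY) HYZ) as [([_ Hc] & _) | (_ & HZ & HvYZ & HZY)].
  { destruct HY as [_ Hc']. congruence. }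
  assert (HZa : action M Z) by apply (Add_action (proj1 HZ)).
  assert (HgZ : gamma M X < Z).
  { apply action_lt_Begin in HgY; [| apply Add_action, (gamma_Add0 (Op1_Rem1 HX1))].
    destruct (Begin_le_of_not_lt HZa HZY) as [E | L].
    - rewrite <- E; exact HgY.
    - exact (lt_trans HgY L). }
  assert (HXZ : Begin M X < End M Z).
  { apply Op1_Begin_lt_Op0_End; auto using Op1_Rem1, Op0_Add0; congruence. }
  rewrite (Begin_action_id (Rem_action HX)), (End_action_id HZa) in HXZ.
  exact HXZ.
Qed.

Lemma chain_from_Cnt X Y Z :
  Cnt M X -> arrow M X Y -> arrow M Y Z -> Begin M X < End M Z.
Proof.
  intros HX HXY HYZ.
  destruct (arrow_from_Cnt HX HXY) as [(HX1 & HY & Hg) | (_ & HY & _ & HYX)].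
  - destruct (arrow_from_Rem (proj1 HY) HYZ) as (HZ & _ & HvYZ & _ & HgZ).
    apply Op1_Begin_lt_Op0_End; auto using Op1_Cnt1, Op0_Cnt0.
    + rewrite <- Hg; exact HgZ.
    + rewrite <- (val_gamma (Op1_Cnt1 HX1)), <- Hg, val_gamma by apply (Op1_Rem1 HY).
      exact HvYZ.
  - destruct (arrow_from_Add (proj1 HY) HYZ) as (HZ & ->).
    pose proof (gamma_lt_End (Op1_Cnt1 HZ)) as HgZ.
    destruct (Begin_le_of_not_lt (Add_action (proj1 HY)) HYX) as [E | L].
    + rewrite E; exact HgZ.
    + exact (lt_trans L HgZ).
Qed.

End LazySet.

Theorem lemma3p7 (M : sysexec) (HM : is_sysexec M)
  (H0 : A0 M) (H1 : A1 M) (H2 : A2 M) (X Y Z : ev M) :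
  arrow M X Y -> arrow M Y Z ->
  (Add M X -> lt M X Z /\ Cnt_p M c1 Y /\ Rem_p M c1 Z) /\
  (Rem M X -> lt M X Z) /\
  (Cnt M X -> lt M (Begin M X) (End M Z)).
Proof.
  intros HXY HYZ.
  split; [|split]; intros HX.
  - exact (chain_from_Add HM H0 H1 HX HXY HYZ).
  - exact (chain_from_Rem HM H0 H1 H2 HX HXY HYZ).
  - exact (chain_from_Cnt HM H0 H1 H2 HX HXY HYZ).
Qed.
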